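(* Let $\mathcal{K}$ be a continuous unitary representation of $\overline{\mathfrak{S}}_\infty$ in a Hilbert space $\mathcal{H}$, let $n\geq 0$ be an integer, and let $P_n$ be the weak-operator limit of $\mathcal{K}({}^n\sigma_m)$ as $m\to\infty$. Then $P_n$ is a projection, i.e. $P_n^2=P_n$.
   Context: $\overline{\mathfrak{S}}_\infty$ is the group of all bijections of $\mathbb{N}$, with the Polish topology in which the subgroups $\mathfrak{S}(n,\infty)=\{s: s(k)=k \text{ for } k=1,\dots,n\}$ form a fundamental system of neighborhoods of the identity; continuity of $\mathcal{K}$ means $\lim_{k\to\infty}\sup_{s\in\mathfrak{S}(k,\infty)}\|\mathcal{K}(s)\eta-\eta\|=0$ for each $\eta\in\mathcal{H}$. $(k\;j)$ denotes the transposition of $k$ and $j$, and ${}^n\sigma_m=(n+1\;\;n+m+1)(n+2\;\;n+m+2)\cdots(n+m\;\;n+2m)$. The weak-operator limit $P_n=\lim_{m\to\infty}\mathcal{K}({}^n\sigma_m)$ exists and is a self-adjoint operator. *)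

From HB Require Import structures.
From mathcomp Require Import all_boot all_order all_algebra.
From mathcomp Require Import complex.
From mathcomp Require Import reals.
Set Implicit Arguments.
Unset Strict Implicit.
Unset Printing Implicit Defensive.
Import Order.TTheory GRing.Theory Num.Theory.
Local Open Scope ring_scope.

(* Bijections of N.  We use 0-based naturals: the point k of N = {1,2,..}
   of the paper is the natural number k-1 here.                          *)
Record bij := Bij {
  bfun :> nat -> nat;
  binv : nat -> nat;
  bfunK : cancel bfun binv;
  binvK : cancel binv bfun }.

Definition bij_id : bij := @Bij id id (fun _ => erefl) (fun _ => erefl).

Lemma bij_comp_K (s t : bij) : cancel (s \o t) (binv t \o binv s).
Proof. by move=> x /=; rewrite bfunK bfunK. Qed.
Lemma bij_comp_Kinv (s t : bij) : cancel (binv t \o binv s) (s \o t).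
Proof. by move=> x /=; rewrite binvK binvK. Qed.

Definition bij_comp (s t : bij) : bij :=
  @Bij (s \o t) (binv t \o binv s) (bij_comp_K s t) (bij_comp_Kinv s t).

Definition trf (a b : nat) (j : nat) : nat :=
  if j == a then b else if j == b then a else j.
Lemma trfK (a b : nat) : cancel (trf a b) (trf a b).
Proof.
move=> j; rewrite /trf.
case: (eqVneq j a) => [->|hja]; first by rewrite eqxx; case: eqVneq.
case: (eqVneq j b) => [->|hjb]; first by rewrite eqxx.
by rewrite (negPf hja) (negPf hjb).
Qed.
Definition transp (a b : nat) : bij := @Bij (trf a b) (trf a b) (trfK a b) (trfK a b).

(* ^n sigma_m = (n+1 n+m+1)(n+2 n+m+2)...(n+m n+2m)   (1-based, paper)
            = (n  n+m)(n+1 n+m+1)...(n+m-1 n+2m-1)   (0-based, here)   *)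
Definition nsigma (n m : nat) : bij :=
  foldr bij_comp bij_id [seq transp (n + i) (n + m + i) | i <- iota 0 m].

Definition fixes_first (k : nat) (s : bij) : Prop := forall j, (j < k)%N -> s j = j.

Record is_hilbert (R : realType) (H : lmodType R[i]) (ip : H -> H -> R[i]) : Prop := {
  ip_linl : forall (a : R[i]) (x y z : H), ip (a *: x + y) z = a * ip x z + ip y z;
  ip_herm : forall x y : H, ip y x = (ip x y)^*;
  ip_ge0 : forall x : H, 0 <= ip x x;
  ip_eq0 : forall x : H, ip x x = 0 -> x = 0;
  ip_complete : forall u : nat -> H,
    (forall e : R[i], 0 < e -> exists N, forall p q, (N <= p)%N -> (N <= q)%N ->
        ip (u p - u q) (u p - u q) < e) ->
    exists l : H, forall e : R[i], 0 < e -> exists N, forall p, (N <= p)%N ->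
        ip (u p - l) (u p - l) < e }.

Definition unitary_rep (R : realType) (H : lmodType R[i]) (ip : H -> H -> R[i])
    (K : bij -> H -> H) : Prop :=
  [/\ forall s (a : R[i]) (x y : H), K s (a *: x + y) = a *: K s x + K s y,
      forall s (x y : H), ip (K s x) (K s y) = ip x y,
      forall x : H, K bij_id x = x &
      forall s t (x : H), K (bij_comp s t) x = K s (K t x)].

Definition rep_continuous (R : realType) (H : lmodType R[i]) (ip : H -> H -> R[i])
    (K : bij -> H -> H) : Prop :=
  forall (eta : H) (e : R[i]), 0 < e -> exists k, forall s : bij, fixes_first k s ->
    ip (K s eta - eta) (K s eta - eta) < e.

Definition weak_op_limit (R : realType) (H : lmodType R[i]) (ip : H -> H -> R[i])
    (A : nat -> H -> H) (P : H -> H) : Prop :=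
  forall (xi eta : H) (e : R[i]), 0 < e -> exists N, forall m, (N <= m)%N ->
    `| ip (A m xi) eta - ip (P xi) eta | < e.

(* For a fixed vector xi, P xi is invariant under every K(nsigma n m): in
   <P xi, K(nsigma n m) eta> = lim_M <K(nsigma n M) xi, K(nsigma n m) eta>
   one rewrites nsigma n m * nsigma n M = nsigma n M * t with
   t = nsigma n M * nsigma n m * nsigma n M, which fixes the first n + M
   points when M >= 2m; continuity then makes K t xi close to xi, so the limit
   is <P xi, eta>.  Hence K(nsigma n m) (P xi) = P xi for all m, and passing to
   the weak limit gives P (P xi) = P xi. *)
From Pilot Require Import Defs.
From HB Require Import structures.
From mathcomp Require Import all_boot all_order all_algebra.
From mathcomp Require Import complex.
From mathcomp Require Import reals.
From mathcomp Require Import zify ring.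
From Stdlib Require Import FunctionalExtensionality ProofIrrelevance.
Import Order.TTheory GRing.Theory Num.Theory.

Lemma bij_eq (s t : bij) : s =1 t -> s = t.
Proof.
case: s t => f g fK gK [f' g' fK' gK'] /= /functional_extensionality ef.
subst f'.
have eg : g = g'.
  by apply: functional_extensionality => x; apply: (can_inj fK); rewrite gK gK'.
subst g'.
by rewrite (proof_irrelevance _ fK fK') (proof_irrelevance _ gK gK').
Qed.

Lemma fixes_first_le (k k' : nat) (s : bij) :
  (k <= k')%N -> fixes_first k' s -> fixes_first k s.
Proof. by move=> hk hs j hj; apply: hs; apply: leq_trans hk. Qed.

Lemma prod_transp_shiftE (n m c k j : nat) : (c + k <= m)%N ->
  foldr Defs.bij_comp bij_id [seq transp (n + i) (n + m + i) | i <- iota c k] j =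
  if (n + c <= j) && (j < n + c + k) then j + m
  else if (n + m + c <= j) && (j < n + m + c + k) then j - m else j.
Proof.
elim: k c => [|k IH] c hck /=; first by case: ifP => h1; [lia | case: ifP; lia].
rewrite IH; last lia.
by rewrite /trf; repeat case: ifP; lia.
Qed.

Lemma nsigmaE (n m j : nat) : nsigma n m j =
  if (n <= j) && (j < n + m) then j + m
  else if (n + m <= j) && (j < n + m + m) then j - m else j.
Proof. by rewrite /nsigma prod_transp_shiftE // !addn0. Qed.

Lemma nsigmaK (n m : nat) : involutive (nsigma n m).
Proof. by move=> j; rewrite !nsigmaE; repeat case: ifP; lia. Qed.

Lemma nsigma_conj_fixes_first (n m M : nat) : (m + m <= M)%N ->
  fixes_first (n + M)
    (Defs.bij_comp (nsigma n M) (Defs.bij_comp (nsigma n m) (nsigma n M))).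
Proof. by move=> hM j hj /=; rewrite !nsigmaE; repeat case: ifP; lia. Qed.

Local Open Scope ring_scope.

Lemma eq_of_norm_sub_lt (C : numFieldType) (a b : C) :
  (forall e : C, 0 < e -> `|a - b| < e) -> a = b.
Proof.
move=> hlt; have [//|hab] := eqVneq a b.
have hpos : 0 < `|a - b| by rewrite normr_gt0 subr_eq0.
by have := hlt _ hpos; rewrite ltxx.
Qed.

Lemma eq_of_approx3 (C : numFieldType) (a b : C) :
  (forall e : C, 0 < e ->
     exists x y, [/\ `|a - x| < e, `|x - y| < e & `|y - b| < e]) ->
  a = b.
Proof.
move=> happrox; apply: eq_of_norm_sub_lt => e e0.
have e3 : 0 < e / 3 by rewrite divr_gt0 ?ltr0n.
have [x [y [hax hxy hyb]]] := happrox _ e3.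
have -> : a - b = (a - x) + (x - y) + (y - b) by ring.
have -> : e = e / 3 + e / 3 + e / 3 by field.
rewrite (le_lt_trans (ler_normD _ _)) // ltrD //.
by rewrite (le_lt_trans (ler_normD _ _)) // ltrD.
Qed.

Section InnerProduct.
Context {R : realType} {H : lmodType R[i]} {ip : H -> H -> R[i]}.
Hypothesis hH : is_hilbert ip.

Lemma ip0l (z : H) : ip 0 z = 0.
Proof.
have := ip_linl hH 1 0 0 z; rewrite scaler0 addr0 mul1r.
by rewrite -{1}[ip 0 z]addr0 => /addrI <-.
Qed.

Lemma ipZl (a : R[i]) (x z : H) : ip (a *: x) z = a * ip x z.
Proof. by have := ip_linl hH a x 0 z; rewrite !addr0 ip0l addr0. Qed.

Lemma ipBl (x y z : H) : ip (x - y) z = ip x z - ip y z.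
Proof.
have := ip_linl hH (-1) y x z; rewrite scaleN1r addrC => ->.
by rewrite mulN1r addrC.
Qed.

Lemma ip0r (x : H) : ip x 0 = 0.
Proof. by rewrite (ip_herm hH) ip0l conjC0. Qed.

Lemma ipZr (x : H) (a : R[i]) (z : H) : ip x (a *: z) = a^* * ip x z.
Proof. by rewrite (ip_herm hH) ipZl rmorphM /= -(ip_herm hH). Qed.

Lemma ipBr (x y z : H) : ip x (y - z) = ip x y - ip x z.
Proof. by rewrite (ip_herm hH) ipBl rmorphB /= -!(ip_herm hH). Qed.

Lemma ip_eq_l (x x' : H) : (forall y, ip x y = ip x' y) -> x = x'.
Proof.
move=> hxy; apply/eqP; rewrite -subr_eq0; apply/eqP; apply: (ip_eq0 hH).
by rewrite ipBl hxy subrr.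
Qed.

Lemma ip_Cauchy_Schwarz (d w : H) : `|ip d w| ^+ 2 <= ip w w * ip d d.
Proof.
have [->|hw0] := eqVneq w 0; first by rewrite ip0r normr0 expr0n ip0l mul0r.
have hwpos : 0 < ip w w.
  by rewrite lt_def (ip_ge0 hH) andbT; apply: contra_neq hw0 => /(ip_eq0 hH).
have hwc : (ip w w)^* = ip w w by apply: geC0_conj; apply: ltW.
have hwd : ip w d = (ip d w)^* by apply: (ip_herm hH).
(* the square norm of the residue of d after projecting along w *)
have := ip_ge0 hH (ip w w *: d - ip d w *: w).
have -> : ip (ip w w *: d - ip d w *: w) (ip w w *: d - ip d w *: w)
        = ip w w * (ip w w * ip d d - ip d w * (ip d w)^*).
  by rewrite !ipBl !ipZl !ipBr !ipZr hwc hwd; ring.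
by rewrite pmulr_rge0 // subr_ge0 normCK.
Qed.

Lemma norm_ip_lt (d w : H) (e : R[i]) :
  0 < e -> ip d d < e ^+ 2 / (ip w w + 1) -> `|ip d w| < e.
Proof.
move=> e0 hd.
have hw1 : 0 < ip w w + 1 by rewrite ltr_wpDl ?(ip_ge0 hH).
rewrite -(ltr_pXn2r (_ : 0 < 2)%N) ?nnegrE ?normr_ge0 ?ltW //.
apply: (le_lt_trans (ip_Cauchy_Schwarz d w)).
apply: (le_lt_trans (y := ip w w * (e ^+ 2 / (ip w w + 1)))).
  by rewrite ler_wpM2l ?(ip_ge0 hH) ?ltW.
rewrite -subr_gt0.
have -> : e ^+ 2 - ip w w * (e ^+ 2 / (ip w w + 1)) = e ^+ 2 / (ip w w + 1).
  by field; rewrite gt_eqF.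
by rewrite divr_gt0 ?exprn_gt0.
Qed.

Section UnitaryRepresentation.
Context {K : bij -> H -> H}.
Hypothesis hK : unitary_rep ip K.

Lemma rep_sub (s : bij) (x y : H) : K s (x - y) = K s x - K s y.
Proof.
case: hK => Klin _ _ _.
by have := Klin s (-1) y x; rewrite !scaleN1r addrC => ->; rewrite addrC.
Qed.

Lemma rep_ext (s t : bij) (x : H) : s =1 t -> K s x = K t x.
Proof. by move/bij_eq ->. Qed.

Lemma rep_involutive (s : bij) (x : H) : involutive s -> K s (K s x) = x.
Proof.
case: hK => _ _ Kid Kcomp hs.
by rewrite -Kcomp -[RHS]Kid; apply: rep_ext => j /=; rewrite hs.
Qed.

Lemma rep_involutive_selfadj (s : bij) (x y : H) :
  involutive s -> ip (K s x) y = ip x (K s y).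
Proof.
case: hK => _ Kunit _ _ hs.
by rewrite -{1}[y](rep_involutive s y hs) Kunit.
Qed.

Lemma rep_conj_involutive (s u : bij) (x : H) : involutive u ->
  K s (K u x) = K u (K (Defs.bij_comp u (Defs.bij_comp s u)) x).
Proof.
case: hK => _ _ _ Kcomp hu.
by rewrite -!Kcomp; apply: rep_ext => j /=; rewrite hu.
Qed.

Context {n : nat} {P : H -> H}.
Hypothesis hcont : rep_continuous ip K.
Hypothesis hP : weak_op_limit ip (fun m => K (nsigma n m)) P.

Lemma weak_limit_nsigma_invariant (m : nat) (xi eta : H) :
  ip (K (nsigma n m) (P xi)) eta = ip (P xi) eta.
Proof.
rewrite (rep_involutive_selfadj _ _ _ (nsigmaK n m)).
apply: eq_of_approx3 => e e0.
have [N1 hN1] := hP xi (K (nsigma n m) eta) e e0.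
have [N2 hN2] := hP xi eta e e0.
have de : 0 < e ^+ 2 / (ip eta eta + 1).
  by rewrite divr_gt0 ?exprn_gt0 ?ltr_wpDl ?(ip_ge0 hH).
have [k hk] := hcont xi _ de.
pose M := (N1 + N2 + k + m + m)%N.
pose t := Defs.bij_comp (nsigma n M) (Defs.bij_comp (nsigma n m) (nsigma n M)).
exists (ip (K (nsigma n M) xi) (K (nsigma n m) eta)), (ip (K (nsigma n M) xi) eta).
split.
- by rewrite distrC; apply: hN1; lia.
- have hm := nsigmaK n m; have hM := nsigmaK n M.
  rewrite -(rep_involutive_selfadj _ _ _ hm) (rep_conj_involutive _ _ _ hM) -/t.
  rewrite -ipBl -rep_sub (rep_involutive_selfadj _ _ _ hM).
  apply: norm_ip_lt => //.
  case: hK => _ Kunit _ _; rewrite Kunit.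
  apply: hk; apply: (@fixes_first_le _ (n + M)); first lia.
  by apply: nsigma_conj_fixes_first; lia.
- by apply: hN2; lia.
Qed.

End UnitaryRepresentation.
End InnerProduct.

Theorem lemma2 (R : realType) (H : lmodType R[i]) (ip : H -> H -> R[i])
    (K : bij -> H -> H) (n : nat) (P : H -> H) :
  is_hilbert ip ->
  unitary_rep ip K ->
  rep_continuous ip K ->
  weak_op_limit ip (fun m => K (nsigma n m)) P ->
  forall xi : H, P (P xi) = P xi.
Proof.
move=> hH hK hcont hP xi.
apply: (ip_eq_l hH) => eta; apply: eq_of_norm_sub_lt => e e0.
have [N hN] := hP (P xi) eta e e0.
by rewrite distrC -(weak_limit_nsigma_invariant hH hK hcont hP N) hN.
Qed.
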